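(* Let $G$ be a finite group, let $\mathscr{F}$ be a family of subgroups of $G$, and let $p\in\mathbb{Z}$ be a prime or $0$. The ideal $\mathcal{P}_{\mathscr{F},p}$ of $\mathrm{Gh}(\underline{A}_G)$ is prime if and only if $\mathcal{P}_{\mathscr{F},p}=\mathcal{P}_{H,p}$ for some $H\le G$.
   Context: Let $G$ be a finite group. For $H\le G$, $\widetilde{A}(H)$ is the subring of $\prod_{I\le H}\mathbb{Z}$ of tuples $(a_I)_{I\le H}$ with $a_{hIh^{-1}}=a_I$ for $h\in H$. $\mathrm{Gh}(\underline{A}_G)$ is the $G$-Tambara functor with $\mathrm{Gh}(\underline{A}_G)(G/H)=\widetilde{A}(H)$ and, for $H\le K$, $g\in G$, $I^g=g^{-1}Ig$: $\mathrm{res}^K_H(b)_L=b_L$; $\mathrm{tr}^K_H(a)_I=\sum_{kH\in K/H,\ I^k\le H}a_{I^k}$; $\mathrm{nm}^K_H(a)_I=\prod_{IgH\in I\backslash K/H}a_{I^g\cap H}$; $c_{g,H}(a)_J=a_{J^g}$ for $J\le gHg^{-1}$. A family of subgroups is a nonempty set of subgroups of $G$ closed under conjugation and passing to subgroups. For a family $\mathscr{F}$ and $p$ a prime or $0$, $\mathcal{P}_{\mathscr{F},p}$ is the ideal with $\mathcal{P}_{\mathscr{F},p}(G/H)=\prod_{I\le H}\delta(I)\mathbb{Z}\cap\widetilde{A}(H)$, where $\delta(I)=p$ if $I\in\mathscr{F}$ and $\delta(I)=1$ otherwise. For $H\le G$, $\mathcal{P}_{H,p}=\mathcal{P}_{\mathscr{F}_H,p}$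 with $\mathscr{F}_H=\{I\le G: I\preccurlyeq_G H\}$ (subgroups conjugate to a subgroup of $H$). A Tambara ideal $\mathcal{I}$ is a collection of ideals $\mathcal{I}(G/H)$ closed under all restrictions, transfers, norms and conjugations; it is prime (Nakaoka) if $\mathcal{I}\neq T$ and whenever $a\in T(G/K_1)$, $b\in T(G/K_2)$ satisfy $\big(\mathrm{nm}^L_{g_1H_1g_1^{-1}}c_{g_1,H_1}\mathrm{res}^{K_1}_{H_1}(a)\big)\big(\mathrm{nm}^L_{g_2H_2g_2^{-1}}c_{g_2,H_2}\mathrm{res}^{K_2}_{H_2}(b)\big)\in\mathcal{I}(G/L)$ for all $L,H_1,H_2\le G$, $g_1,g_2\in G$ with $H_i\le K_i$, $g_iH_ig_i^{-1}\le L$, then $a\in\mathcal{I}(G/K_1)$ or $b\in\mathcal{I}(G/K_2)$. *)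

(* The finite group G is the whole finGroupType gT
   (every finite group is one); subgroups of G are elements of {group gT}. *)
From HB Require Import structures.
From mathcomp Require Import all_boot all_order all_algebra all_fingroup.
Set Implicit Arguments. Unset Strict Implicit. Unset Printing Implicit Defensive.
Import GRing.Theory Num.Theory.

Section GhostTambara.
Variable gT : finGroupType.

(* An element of Gh(A_G)(G/K) = tilde A(K) is represented by a function
   a : {group gT} -> int whose value a I is the coordinate a_I for I <= K,
   normalised to 0 for I not contained in K, and invariant under conjugation
   by elements of K.  Note: in MathComp  I :^ h = h^-1 I h. *)
Definition ghostTuple := {group gT} -> int.

Definition in_ghost (K : {group gT}) (a : ghostTuple) : Prop :=
  (forall I : {group gT}, ~~ (I \subset K) -> a I = 0%R) /\
  (forall (I : {group gT}) (h : gT), I \subset K -> h \in K ->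
     a (I :^ h)%G = a I).

Definition gh_res (H : {group gT}) (b : ghostTuple) : ghostTuple :=
  fun L => if L \subset H then b L else 0%R.

Definition gh_tr (K H : {group gT}) (a : ghostTuple) : ghostTuple :=
  fun I => if I \subset K then
     (\sum_(C in lcosets H K | (I :^ repr C)%g \subset H) a (I :^ repr C)%G)%R
   else 0%R.

(* nm^K_H (a)_I = prod_{I g H in I\K/H} a_{I^g cap H}  for I <= K *)
Definition gh_nm (K H : {group gT}) (a : ghostTuple) : ghostTuple :=
  fun I => if I \subset K then
     (\prod_(D in [set ((I :* g) * H)%g | g in K])
         a (I :^ repr D :&: H)%G)%R
   else 0%R.

(* c_{g,H}(a)_J = a_{J^g}  for J <= g H g^-1 = H :^ g^-1 *)
Definition gh_conj (g : gT) (H : {group gT}) (a : ghostTuple) : ghostTuple :=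
  fun J => if J \subset (H :^ g^-1)%g then a (J :^ g)%G else 0%R.

Definition ghostIdeal := {group gT} -> ghostTuple -> Prop.

Definition nakaoka_prime (P : ghostIdeal) : Prop :=
  (exists (K : {group gT}) (a : ghostTuple), in_ghost K a /\ ~ P K a) /\
  (forall (K1 K2 : {group gT}) (a b : ghostTuple),
     in_ghost K1 a -> in_ghost K2 b ->
     (forall (L H1 H2 : {group gT}) (g1 g2 : gT),
        H1 \subset K1 -> H2 \subset K2 ->
        (H1 :^ g1^-1)%g \subset L -> (H2 :^ g2^-1)%g \subset L ->
        P L (fun I =>
          (gh_nm L (H1 :^ g1^-1)%G (gh_conj g1 H1 (gh_res H1 a)) I *
           gh_nm L (H2 :^ g2^-1)%G (gh_conj g2 H2 (gh_res H2 b)) I)%R)) ->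
     P K1 a \/ P K2 b).

Definition is_family (F : {set {group gT}}) : Prop :=
  F != set0 /\
  (forall (I : {group gT}) (g : gT), I \in F -> (I :^ g)%G \in F) /\
  (forall I J : {group gT}, J \subset I -> I \in F -> J \in F).

Definition P_fam (F : {set {group gT}}) (p : nat) : ghostIdeal :=
  fun K a => in_ghost K a /\
    (forall I : {group gT}, I \subset K -> I \in F -> (p%:Z %| a I)%Z).

Definition fam_of (H : {group gT}) : {set {group gT}} :=
  [set I : {group gT} | [exists g : gT, (I :^ g)%g \subset H]].

Definition P_sub (H : {group gT}) (p : nat) : ghostIdeal :=
  P_fam (fam_of H) p.

End GhostTambara.

(* Writing F_H for the subgroups conjugate into H: if F = F_H and a, b lie
   outside P_{F,p}, choose coordinates I1 of a and I2 of b in F_H at which p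
   divides neither; conjugating the restrictions of a, b to I1, I2 into H and
   norming up to level H gives the product a_{I1} b_{I2} at the top coordinate
   H, so that product of norms lies outside P_{F,p}(G/H).  Conversely, if
   P_{F,p} is prime, apply primality to the indicator tuples of two maximal
   members M1, M2 of F: a coordinate J of a product of their norms is nonzero
   only if J contains conjugates of both, so for J in F maximality makes M1
   and M2 conjugate to J.  Hence all maximal members of F are conjugate, and
   F = F_M for any one of them. *)

From mathcomp Require Import all_boot all_order all_algebra all_fingroup.
From Stdlib Require Import Classical.
Set Implicit Arguments. Unset Strict Implicit. Unset Printing Implicit Defensive.
Import GRing.Theory Num.Theory.
Local Open Scope group_scope.

Section GhostOperations.
Variable gT : finGroupType.
Implicit Types (H I J K L M : {group gT}) (a b x : ghostTuple gT).

Lemma ghost_eqG x I J : I :=: J -> x I = x J.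
Proof. by move=> eqIJ; congr x; apply: val_inj. Qed.

Lemma in_ghost_res K H a : in_ghost K a -> H \subset K -> in_ghost H (gh_res H a).
Proof.
move=> [_ a_inv] sHK; split=> [I nsIH | I h sIH hH]; rewrite /gh_res.
  by rewrite (negbTE nsIH).
rewrite sIH -{1}(conjGid hH) conjSg sIH.
exact: a_inv (subset_trans sIH sHK) (subsetP sHK h hH).
Qed.

Lemma in_ghost_conj H g a : in_ghost H a -> in_ghost (H :^ g^-1) (gh_conj g H a).
Proof.
move=> [_ a_inv]; split=> [I nsIHg | I h sIHg hHg]; rewrite /gh_conj /=.
  by rewrite (negbTE nsIHg).
have sIgH : I :^ g \subset H by rewrite -(conjsgKV g H) conjSg.
have hgH : h ^ g \in H by rewrite -(conjsgKV g H) memJ_conjg.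
rewrite sIHg -{1}(conjGid hHg) conjSg sIHg -(a_inv _ _ sIgH hgH).
by apply: ghost_eqG; rewrite /= -!conjsgM conjgC.
Qed.

Lemma in_ghost_mul K a b :
  in_ghost K a -> in_ghost K b -> in_ghost K (fun I => a I * b I)%R.
Proof.
move=> [a0 a_inv] [b0 b_inv]; split=> [I nsIK | I h sIK hK].
  by rewrite a0 ?mul0r.
by rewrite a_inv ?b_inv.
Qed.

Section Norm.
Variables (H : {group gT}) (x : ghostTuple gT).
Hypothesis x_ghost : in_ghost H x.

Lemma gh_nm_factor_dcoset J g d :
  d \in J :* g * H -> x (J :^ d :&: H)%G = x (J :^ g :&: H)%G.
Proof.
case/mulsgP=> _ k /rcosetP[j jJ ->] kH ->.
rewrite -(x_ghost.2 (J :^ g :&: H)%G k) ?subsetIr //.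
by apply: ghost_eqG; rewrite /= !conjsgM (conjGid jJ) conjIg (conjGid kH).
Qed.

(* The double cosets of [J :^ h] are the left translates by [h^-1] of those
   of [J], and the factors of the two norms match up along this bijection. *)
Lemma gh_nm_conj L J h :
  J \subset L -> h \in L -> gh_nm L H x (J :^ h)%G = gh_nm L H x J.
Proof.
move=> sJL hL; rewrite /gh_nm /= sJL -{1}(conjGid hL) conjSg sJL.
have -> : [set J :^ h :* g * H | g in L] =
          [set h^-1 *: D | D in [set J :* g * H | g in L]].
  apply/setP=> D; apply/imsetP/imsetP=> [[g gL ->] | [_ /imsetP[g gL ->] ->]].
    exists (J :* (h * g) * H); first by apply/imsetP; exists (h * g); rewrite ?groupM.
    by rewrite conjsgE rcosetM !mulgA.
  exists (h^-1 * g); first by rewrite groupM ?groupV.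
  by rewrite conjsgE !rcosetM -!mulgA lcosetKV.
rewrite big_imset /=; last by move=> D1 D2 _ _; apply: lcoset_inj.
apply: eq_bigr => _ /imsetP[g _ ->].
have gD : g \in J :* g * H.
  by apply/mulsgP; exists g 1; rewrite ?group1 ?mulg1 ?rcoset_refl.
have hrD : h * repr (h^-1 *: (J :* g * H)) \in J :* g * H.
  have: repr (h^-1 *: (J :* g * H)) \in h^-1 *: (J :* g * H).
    by apply: (mem_repr (h^-1 * g)); rewrite mem_lcoset invgK mulKVg.
  by rewrite mem_lcoset invgK.
rewrite (@ghost_eqG _ _ (J :^ (h * repr (h^-1 *: (J :* g * H))) :&: H)%G); last first.
  by rewrite /= conjsgM.
by rewrite (gh_nm_factor_dcoset hrD) (gh_nm_factor_dcoset (mem_repr _ gD)).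
Qed.

Lemma in_ghost_nm L : in_ghost L (gh_nm L H x).
Proof.
split=> [I nsIL | I h sIL hL]; last exact: gh_nm_conj.
by rewrite /gh_nm (negbTE nsIL).
Qed.

End Norm.

Lemma gh_nm_top L H x : H \subset L -> gh_nm L H x L = x H.
Proof.
move=> sHL; rewrite /gh_nm subxx.
have -> : [set L :* g * H | g in L] = [set (L : {set gT})].
  apply/setP=> D; rewrite inE; apply/imsetP/eqP=> [[g gL ->] | ->].
    by rewrite rcoset_id // mulGSid.
  by exists 1; rewrite ?rcoset_id ?group1 ?mulGSid.
rewrite big_set1; apply: ghost_eqG.
by rewrite /= repr_group conjsg1; apply/setIidPr.
Qed.

Lemma gh_nm_neq0 L H x J :
  gh_nm L H x J != 0%R -> exists d, x (J :^ d :&: H)%G != 0%R.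
Proof.
rewrite /gh_nm; case: ifP => [_ /prodf_neq0 nz | _]; last by rewrite eqxx.
by exists (repr (J :* 1 * H)); apply: nz; apply/imsetP; exists 1.
Qed.

Lemma gh_conj_res_top I g a : gh_conj g I (gh_res I a) (I :^ g^-1)%G = a I.
Proof.
rewrite /gh_conj /gh_res /= subxx conjsgKV subxx.
by apply: ghost_eqG; rewrite /= conjsgKV.
Qed.

End GhostOperations.

Section PrimeOrZero.
Variable p : nat.
Hypothesis p_prime0 : prime p \/ p = 0.

Lemma Euclid_dvdzM (m n : int) :
  (p%:Z %| (m * n)%R)%Z -> (p%:Z %| m)%Z \/ (p%:Z %| n)%Z.
Proof.
rewrite !dvdzE abszM /=; case: p_prime0 => [p_pr | ->].
  by rewrite Euclid_dvdM //; case/orP; [left | right].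
by rewrite !dvd0n muln_eq0; case/orP; [left | right].
Qed.

Lemma ndvdz1 : ~ (p%:Z %| 1)%Z.
Proof.
rewrite dvdzE /= dvdn1; case: p_prime0 => [p_pr | -> //].
by move/eqP=> p1; rewrite p1 in p_pr.
Qed.

End PrimeOrZero.

Lemma nakaoka_prime_ext (gT : finGroupType) (P Q : ghostIdeal gT) :
  (forall K a, P K a <-> Q K a) -> nakaoka_prime P -> nakaoka_prime Q.
Proof.
move=> eqPQ [[K0 [a0 [a0_ghost nPa0]]] P_prime]; split.
  by exists K0, a0; rewrite -eqPQ.
move=> K1 K2 a b a_ghost b_ghost Qprod; rewrite -!eqPQ.
by apply: P_prime => // *; rewrite eqPQ; apply: Qprod.
Qed.

Lemma P_famN_witness (gT : finGroupType) (F : {set {group gT}}) p K (a : ghostTuple gT) :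
  in_ghost K a -> ~ P_fam F p K a ->
  exists I : {group gT}, [/\ I \subset K, I \in F & ~ (p%:Z %| a I)%Z].
Proof.
move=> a_ghost nPa; apply: NNPP => nI; apply: nPa; split=> // I sIK IF.
by apply: NNPP => npa; apply: nI; exists I.
Qed.

Lemma P_sub_prime (gT : finGroupType) (H : {group gT}) p :
  prime p \/ p = 0 -> nakaoka_prime (P_sub H p).
Proof.
move=> p_prime0; have mem_fam_of (I : {group gT}) g : I :^ g \subset H -> I \in fam_of H.
  by move=> sIgH; rewrite inE; apply/existsP; exists g.
split.
  exists [set: gT]%G, (fun _ => 1%R); split; first by split=> // I; rewrite subsetT.
  case=> _ /(_ 1%G (sub1G _)) p_dvd1; apply: (ndvdz1 p_prime0); apply: p_dvd1.
  by apply: (mem_fam_of _ 1); rewrite conjs1g sub1G.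
move=> K1 K2 a b a_ghost b_ghost Pprod; apply: NNPP => /not_or_and[nPa nPb].
have [I1 [sI1K1 /[!inE] /existsP[u1 sI1H] npa]] := P_famN_witness a_ghost nPa.
have [I2 [sI2K2 /[!inE] /existsP[u2 sI2H] npb]] := P_famN_witness b_ghost nPb.
rewrite -[u1]invgK in sI1H; rewrite -[u2]invgK in sI2H.
have [_ /(_ H (subxx _) (mem_fam_of H 1 _))] := Pprod H I1 I2 _ _ sI1K1 sI2K2 sI1H sI2H.
rewrite conjsg1 (gh_nm_top _ sI1H) (gh_nm_top _ sI2H) !gh_conj_res_top.
by move=> /(_ (subxx _)) /(Euclid_dvdzM p_prime0) [].
Qed.

Section Indicator.
Variable gT : finGroupType.
Implicit Types (H J L M : {group gT}).

Definition gh_indicator M : ghostTuple gT := fun Z => if Z :==: M then 1%R else 0%R.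

Lemma in_ghost_indicator M : in_ghost M (gh_indicator M).
Proof.
rewrite /gh_indicator; split=> [Z nsZM | Z h sZM hM].
  by case: eqP nsZM => // ->; rewrite subxx.
by rewrite /= -{1}(conjGid hM) (inj_eq (@conjsg_inj _ h)).
Qed.

Lemma gh_nm_indicator_neq0 M L H g J :
  gh_nm L (H :^ g^-1)%G (gh_conj g H (gh_res H (gh_indicator M))) J != 0%R ->
  exists c, M \subset J :^ c.
Proof.
case/gh_nm_neq0=> d; rewrite /gh_conj /gh_res /gh_indicator /=.
do 2!case: ifP => // _; case: ifP => [/eqP <- _ | _]; last by rewrite eqxx.
by exists (d * g); rewrite conjsgM conjSg subsetIl.
Qed.

End Indicator.

Section MaximalMembers.
Variables (gT : finGroupType) (F : {set {group gT}}) (p : nat).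
Hypothesis F_conj : forall (I : {group gT}) g, I \in F -> (I :^ g)%G \in F.
Hypothesis p_prime0 : prime p \/ p = 0.
Implicit Types (H J L M : {group gT}).

Lemma P_fam_indicatorN M : M \in F -> ~ P_fam F p M (gh_indicator M).
Proof.
move=> MF [_ /(_ M (subxx _) MF)]; rewrite /gh_indicator eqxx.
exact: ndvdz1.
Qed.

Lemma gh_nm_indicator_max_conj M L H g J :
  [max M | M \in F] -> J \in F ->
  gh_nm L (H :^ g^-1)%G (gh_conj g H (gh_res H (gh_indicator M))) J != 0%R ->
  exists c, J :^ c = M.
Proof.
move=> /maxgroupP[_ maxM] JF /gh_nm_indicator_neq0[c sMJc].
by exists c; apply: maxM sMJc; apply: F_conj.
Qed.

(* The coordinate at [J \in F] of such a product is nonzero only if [J] is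
   conjugate to both [M1] and [M2]. *)
Lemma P_fam_nm_indicators M1 M2 L H1 H2 g1 g2 :
  [max M1 | M1 \in F] -> [max M2 | M2 \in F] -> ~ (exists c, M1 :^ c = M2) ->
  H1 \subset M1 -> H2 \subset M2 ->
  P_fam F p L (fun I =>
    (gh_nm L (H1 :^ g1^-1)%G (gh_conj g1 H1 (gh_res H1 (gh_indicator M1))) I *
     gh_nm L (H2 :^ g2^-1)%G (gh_conj g2 H2 (gh_res H2 (gh_indicator M2))) I)%R).
Proof.
move=> maxM1 maxM2 nconj sH1M1 sH2M2; split.
  by apply: in_ghost_mul; apply/in_ghost_nm/in_ghost_conj;
    apply: in_ghost_res (in_ghost_indicator _) _.
move=> J _ JF; apply: contraT => /negP ndvd.
have : (gh_nm L (H1 :^ g1^-1)%G (gh_conj g1 H1 (gh_res H1 (gh_indicator M1))) J *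
        gh_nm L (H2 :^ g2^-1)%G (gh_conj g2 H2 (gh_res H2 (gh_indicator M2))) J != 0)%R.
  by apply: contra_not_neq ndvd => ->; rewrite dvdz0.
rewrite mulf_eq0 negb_or.
case/andP=> /(gh_nm_indicator_max_conj maxM1 JF)[c1 eqJM1].
move=> /(gh_nm_indicator_max_conj maxM2 JF)[c2 eqJM2].
by case: nconj; exists (c1^-1 * c2); rewrite -eqJM1 -conjsgM mulKVg.
Qed.

Lemma max_members_conj M1 M2 :
  nakaoka_prime (P_fam F p) -> [max M1 | M1 \in F] -> [max M2 | M2 \in F] ->
  exists c, M1 :^ c = M2.
Proof.
move=> [_ P_prime] maxM1 maxM2; apply: NNPP => nconj.
have [] := P_prime _ _ _ _ (in_ghost_indicator M1) (in_ghost_indicator M2).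
- by move=> L H1 H2 g1 g2 sH1M1 sH2M2 _ _; apply: P_fam_nm_indicators.
- by apply: P_fam_indicatorN; apply: maxgroupp maxM1.
- by apply: P_fam_indicatorN; apply: maxgroupp maxM2.
Qed.

End MaximalMembers.

Lemma family_eq_fam_of (gT : finGroupType) (F : {set {group gT}}) (M : {group gT}) :
  is_family F -> M \in F ->
  (forall M2 : {group gT}, [max M2 | M2 \in F] -> exists c, M2 :^ c = M) ->
  F = fam_of M.
Proof.
move=> [_ [F_conj F_sub]] MF max_conjM; apply/setP=> I; rewrite inE.
apply/idP/existsP=> [IF | [g sIgM]].
  have [M2 maxM2 sIM2] := @maxgroup_exists _ (fun M2 => M2 \in F) I IF.
  have [c <-] := max_conjM M2 maxM2.
  by exists c; rewrite conjSg.
have -> : I = ((I :^ g) :^ g^-1)%G by apply: val_inj; rewrite /= conjsgK.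
exact/F_conj/(F_sub _ _ sIgM MF).
Qed.

Theorem theorem4p2 (gT : finGroupType) (F : {set {group gT}}) (p : nat) :
  is_family F -> (prime p \/ p = 0) ->
  (nakaoka_prime (P_fam F p) <->
   exists H : {group gT},
     forall (K : {group gT}) (a : ghostTuple gT),
       P_fam F p K a <-> P_sub H p K a).
Proof.
move=> F_family p_prime0; split=> [P_prime | [H eqPH]]; last first.
  exact: nakaoka_prime_ext (fun K a => iff_sym (eqPH K a)) (P_sub_prime H p_prime0).
have [F_neq0 [F_conj _]] := F_family.
have [M0 M0F] := set0Pn _ F_neq0.
have [M maxM _] := @maxgroup_exists _ (fun M => M \in F) M0 M0F.
have eqF : F = fam_of M.
  apply: family_eq_fam_of F_family (maxgroupp maxM) _ => M2 maxM2.
  exact: max_members_conj F_conj p_prime0 _ _ P_prime maxM2 maxM.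
by exists M => K a; rewrite /P_sub -eqF.
Qed.
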